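(* Let $G$ be a finite graph with at least one vertex and $\lambda>0$. Let $\mathbf{I}$ be an independent set drawn from the hard-core model at fugacity $\lambda$ on $G$. (i) For every $v\in V(G)$, writing $\mathbf{F}_v$ for the subgraph of $G$ induced by the neighbours of $v$ that are externally uncovered by $\mathbf{I}$, \[ \Pr(v\in\mathbf{I})\ge \frac{\lambda}{1+\lambda}(1+\lambda)^{-\mathbb{E}|V(\mathbf{F}_v)|}\,. \] (ii) Moreover, \[ \mathbb{E}|\mathbf{I}| \ge \frac{\lambda}{1+\lambda}|V(G)|(1+\lambda)^{-\frac{2|E(G)|}{|V(G)|}}\,. \]
   Context: For a graph $G$ with set $\mathcal{I}(G)$ of independent sets (including the empty set) and $\lambda>0$, the hard-core model on $G$ at fugacity $\lambda$ is the probability distribution on $\mathcal{I}(G)$ with $\Pr(\mathbf{I}=I)=\lambda^{|I|}/Z_G(\lambda)$, where $Z_G(\lambda)=\sum_{I\in\mathcal{I}(G)}\lambda^{|I|}$. Given $I\in\mathcal{I}(G)$ and $v\in V(G)$, a neighbour $u\in N(v)$ is externally uncovered by $I$ if $u\notin N(I\setminus N(v))$, i.e. $u$ has no neighbour in $I\setminus N(v)$. *)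

From HB Require Import structures.
From mathcomp Require Import all_boot all_order all_algebra.
From mathcomp Require Import reals exp.
Set Implicit Arguments. Unset Strict Implicit. Unset Printing Implicit Defensive.
Import Order.TTheory GRing.Theory Num.Theory.
Local Open Scope ring_scope.

(* A finite simple graph: vertex type T : finType, adjacency e : rel T,
   assumed symmetric and irreflexive (hypotheses of the theorem). *)
Section HardCore.
Variables (T : finType) (e : rel T).

Definition nbhd (v : T) : {set T} := [set u | e v u].

Definition indep (I : {set T}) : bool :=
  [forall x in I, forall y in I, ~~ e x y].

Definition edges : {set {set T}} :=
  [set E : {set T} | [exists x, exists y, e x y && (E == [set x; y])]].

Variables (R : realType) (lam : R).

Definition Zhc : R := \sum_(I : {set T} | indep I) lam ^+ #|I|.

Definition hc_prob (I : {set T}) : R :=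
  if indep I then lam ^+ #|I| / Zhc else 0.

Definition prob_in (v : T) : R := \sum_(I : {set T} | v \in I) hc_prob I.

(* neighbours of v externally uncovered by I: u \in N(v) with no neighbour
   in I \ N(v); V(F_v) is this set *)
Definition ext_uncovered (v : T) (I : {set T}) : {set T} :=
  [set u in nbhd v | [forall w in I :\: nbhd v, ~~ e u w]].

Definition exp_Fv (v : T) : R :=
  \sum_(I : {set T}) hc_prob I * (#|ext_uncovered v I|)%:R.

Definition exp_size : R := \sum_(I : {set T}) hc_prob I * (#|I|)%:R.

End HardCore.

From HB Require Import structures.
From mathcomp Require Import all_boot all_order all_algebra.
From mathcomp Require Import reals sequences exp.
Set Implicit Arguments. Unset Strict Implicit. Unset Printing Implicit Defensive.
Import Order.TTheory GRing.Theory Num.Theory.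
Local Open Scope ring_scope.

(* Fix v and split an independent set I into J = I \ N(v) and K = I ∩ N(v).
   Given J, every admissible K is a set of neighbours of v with no neighbour
   in J, i.e. a subset of V(F_v); so the independent sets avoiding v above J
   weigh at most λ^|J| (1+λ)^|V(F_v)| in total, while J ∪ {v} is independent
   of weight λ^(|J|+1).  Hence λ E[(1+λ)^(-|V(F_v)|); v ∉ I] <= Pr(v ∈ I), and
   since F_v is empty when v ∈ I this says
   Pr(v ∈ I) >= λ/(1+λ) E[(1+λ)^(-|V(F_v)|)]; Jensen's inequality for the
   convex map t ↦ (1+λ)^(-t) gives (i).  For (ii), sum (i) over v, apply
   Jensen again to the uniform average over V(G), and bound |V(F_v)| by the
   degree of v and the degree sum by 2|E(G)|. *)

Lemma sum_subset_exprn_card (R : comPzSemiRingType) (T : finType) (A : {set T})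
    (x : R) :
  \sum_(K : {set T} | K \subset A) x ^+ #|K| = (1 + x) ^+ #|A|.
Proof.
have term (K : {set T}) :
    \prod_i (if i \in K then (if i \in A then x else 0) else 1)
    = if K \subset A then x ^+ #|K| else 0.
  case: ifPn => [KA | ].
    rewrite -big_mkcond (eq_bigr (fun=> x)) ?prodr_const // => i iK.
    by rewrite (subsetP KA _ iK).
  case/subsetPn => i iK iA.
  by rewrite (bigD1 i) //= iK (negbTE iA) mul0r.
rewrite big_mkcond -(eq_bigr _ (fun K _ => term K)) -bigA_distr.
rewrite -prodr_const (bigID (mem A)) /= [X in _ * X]big1 => [|i /negbTE->];
  last by rewrite add0r.
by rewrite mulr1; apply: eq_bigr => i ->; rewrite addrC.
Qed.

Lemma ler_sum_subpred (R : numDomainType) (I : finType) (P P' : pred I) (F : I -> R) :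
  (forall i, P i -> P' i) -> (forall i, P' i -> 0 <= F i) ->
  \sum_(i | P i) F i <= \sum_(i | P' i) F i.
Proof.
move=> PP' F_ge0; rewrite [X in X <= _]big_mkcond [X in _ <= X]big_mkcond.
apply: ler_sum => i _; case: ifPn => [/PP'-> // | _].
by case: ifPn => // /F_ge0.
Qed.

Lemma expR_sum_le (R : realType) (I : finType) (p y : I -> R) :
  (forall i, 0 <= p i) -> \sum_i p i = 1 ->
  expR (\sum_i p i * y i) <= \sum_i p i * expR (y i).
Proof.
move=> p_ge0 p_sum1; set m := \sum_i p i * y i.
have tangent z : (1 + (z - m)) * expR m <= expR z.
  by rewrite -[in expR z](subrK m z) expRD ler_wpM2r ?expR_ge0 ?expR_ge1Dx.
suff <- : \sum_i p i * ((1 + (y i - m)) * expR m) = expR m.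
  by apply: ler_sum => i _; rewrite ler_wpM2l.
under eq_bigr do rewrite mulrA.
rewrite -mulr_suml [X in X * _](_ : _ = 1) ?mul1r //.
under eq_bigr do rewrite mulrDr mulr1 mulrBr.
by rewrite big_split sumrB /= -mulr_suml p_sum1 -/m mul1r subrr addr0.
Qed.

Lemma powR_sum_le (R : realType) (I : finType) (p x : I -> R) (c : R) : 0 < c ->
  (forall i, 0 <= p i) -> \sum_i p i = 1 ->
  c `^ (\sum_i p i * x i) <= \sum_i p i * c `^ x i.
Proof.
move=> c_gt0 p_ge0 p_sum1.
have powRE z : c `^ z = expR (z * ln c) by rewrite /powR gt_eqF.
rewrite powRE mulr_suml; under [X in _ <= X]eq_bigr do rewrite powRE.
under [X in expR X]eq_bigr do rewrite -mulrA.
exact: expR_sum_le.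
Qed.

Section HardCore.
Variables (T : finType) (e : rel T).
Hypotheses (e_sym : symmetric e) (e_irr : irreflexive e).

Lemma indepP (I : {set T}) x y : indep e I -> x \in I -> y \in I -> ~~ e x y.
Proof. by move=> /forall_inP/(_ x) indI xI /(forall_inP (indI xI)). Qed.

Lemma indepS (J I : {set T}) : J \subset I -> indep e I -> indep e J.
Proof.
move=> /subsetP JI indI; apply/forall_inP => x xJ; apply/forall_inP => y yJ.
exact: indepP indI (JI _ xJ) (JI _ yJ).
Qed.

Lemma indep_setU1 v (J : {set T}) :
  indep e J -> [disjoint J & nbhd e v] -> indep e (v |: J).
Proof.
move=> indJ dJ; have vJ y : y \in J -> ~~ e v y.
  by move=> yJ; have := disjointFr dJ yJ; rewrite inE => ->.
apply/forall_inP => x /setU1P[-> | xJ]; apply/forall_inP => y /setU1P[-> | yJ].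
- by rewrite e_irr.
- exact: vJ.
- by rewrite e_sym vJ.
- exact: indepP indJ xJ yJ.
Qed.

Lemma ext_uncovered_set0 v (I : {set T}) : v \in I -> ext_uncovered e v I = set0.
Proof.
move=> vI; apply/setP => u; rewrite !inE; apply/negbTE/andP => -[evu].
by move/forall_inP/(_ v); rewrite !inE e_irr vI e_sym evu => /(_ isT).
Qed.

Lemma sum_card_nbhd_le : (\sum_v #|nbhd e v| <= 2 * #|edges e|)%N.
Proof.
have card_edge E : E \in edges e -> #|E| = 2%N.
  rewrite inE => /existsP[x /existsP[y /andP[exy /eqP->]]].
  by rewrite cards2; case: eqP exy => [-> | //]; rewrite e_irr.
rewrite mulnC -sum_nat_const -(eq_bigr _ card_edge).
under [X in (_ <= X)%N]eq_bigr do rewrite -sum1_card big_mkcond.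
rewrite exchange_big /=; apply: leq_sum => x _.
rewrite -big_mkcondr sum1dep_card.
have inj_edge : {in nbhd e x &, injective (fun y => [set x; y])}.
  move=> y1 y2; rewrite !inE => exy1 _ E.
  have : y1 \in [set x; y2] by rewrite -E !inE eqxx orbT.
  by rewrite !inE => /orP[/eqP y1x | /eqP //]; rewrite y1x e_irr in exy1.
rewrite -(card_in_imset inj_edge); apply: subset_leq_card.
apply/subsetP => E /imsetP[y /[!inE] exy ->]; rewrite !inE eqxx andbT.
by apply/existsP; exists x; apply/existsP; exists y; rewrite exy eqxx.
Qed.

Variables (R : realType) (lam : R).
Hypothesis lam_ge0 : 0 <= lam.

Let c_gt0 : 0 < 1 + lam. Proof. by rewrite ltr_wpDr. Qed.

(* [ext_uncovered e v I] is convertible to [uncovered (nbhd e v) (I :\: nbhd e v)]. *)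
Definition uncovered (N J : {set T}) : {set T} :=
  [set u in N | [forall w in J, ~~ e u w]].

Lemma fibre_weight_le (N J : {set T}) :
  \sum_(I | indep e I && (I :\: N == J)) lam ^+ #|I|
    <= lam ^+ #|J| * (1 + lam) ^+ #|uncovered N J|.
Proof.
pose fibre := [set I : {set T} | indep e I && (I :\: N == J)].
have weightE I : I \in fibre -> lam ^+ #|I| = lam ^+ #|J| * lam ^+ #|I :&: N|.
  by rewrite inE => /andP[_ /eqP <-]; rewrite -exprD addnC cardsID.
have meetN_inj : {in fibre &, injective (fun I => I :&: N)}.
  move=> I1 I2; rewrite !inE => /andP[_ /eqP I1J] /andP[_ /eqP I2J] I12.
  by rewrite -(setID I1 N) -(setID I2 N) I12 I1J I2J.
have meetN_sub I : I \in fibre -> I :&: N \subset uncovered N J.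
  rewrite inE => /andP[indI /eqP <-]; apply/subsetP => u /setIP[uI uN].
  rewrite inE uN; apply/forall_inP => w /setDP[wI _]; exact: indepP indI uI wI.
rewrite -big_set (eq_bigr _ weightE) -mulr_sumr ler_wpM2l ?exprn_ge0 //.
rewrite -(big_imset (fun K : {set T} => lam ^+ #|K|) meetN_inj).
rewrite -sum_subset_exprn_card.
apply: ler_sum_subpred => [K /imsetP[I /meetN_sub IK ->] // | K _].
exact: exprn_ge0.
Qed.

Lemma sum_weight_setU1_le v :
  lam * \sum_(J : {set T} | [&& indep e J, v \notin J & [disjoint J & nbhd e v]])
          lam ^+ #|J|
    <= \sum_(I : {set T} | (v \in I) && indep e I) lam ^+ #|I|.
Proof.
pose Q := [set J : {set T} | [&& indep e J, v \notin J & [disjoint J & nbhd e v]]].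
have setU1_inj : {in Q &, injective (fun J => v |: J)}.
  move=> J1 J2; rewrite !inE => /and3P[_ vJ1 _] /and3P[_ vJ2 _] J12.
  by rewrite -(setU1K vJ1) -(setU1K vJ2) J12.
rewrite mulr_sumr -big_set (eq_bigr (fun J => lam ^+ #|v |: J|)) => [|J]; last first.
  by rewrite inE => /and3P[_ vJ _]; rewrite cardsU1 vJ exprS.
rewrite -(big_imset (fun I : {set T} => lam ^+ #|I|) setU1_inj).
apply: ler_sum_subpred => [I /imsetP[J] | I _]; last exact: exprn_ge0.
by rewrite inE => /and3P[indJ _ dJ] ->; rewrite setU11 indep_setU1.
Qed.

Lemma weight_not_mem_le v :
  lam * \sum_(I : {set T} | (v \notin I) && indep e I)
          lam ^+ #|I| / (1 + lam) ^+ #|ext_uncovered e v I|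
    <= \sum_(I : {set T} | (v \in I) && indep e I) lam ^+ #|I|.
Proof.
set N := nbhd e v.
pose Q J := [&& indep e J, v \notin J & [disjoint J & N]].
rewrite (partition_big (fun I => I :\: N) Q) => [|I /andP[vI indI]]; last first.
  rewrite /Q (indepS (subsetDl I N)) //= inE negb_and (negbTE vI) orbT /=.
  by have /subsetDP[] := subxx (I :\: N).
apply: le_trans (sum_weight_setU1_le v); rewrite ler_wpM2l //; apply: ler_sum => J QJ.
rewrite (eq_bigr (fun I : {set T} => lam ^+ #|I| / (1 + lam) ^+ #|uncovered N J|));
  last by move=> I /andP[_ /eqP <-].
rewrite -mulr_suml ler_pdivrMr ?exprn_gt0 //.
apply: le_trans (fibre_weight_le N J).
apply: ler_sum_subpred => [I /andP[/andP[_ ->] ->] // | I _]; exact: exprn_ge0.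
Qed.

Lemma Zhc_gt0 : 0 < Zhc e lam.
Proof.
rewrite /Zhc (bigD1 set0) /=; last by apply/forall_inP => x; rewrite inE.
by rewrite cards0 expr0 ltr_wpDr // sumr_ge0 // => I _; rewrite exprn_ge0.
Qed.

Lemma hc_prob_ge0 I : 0 <= hc_prob e lam I.
Proof.
by rewrite /hc_prob; case: ifP => // _; rewrite divr_ge0 ?exprn_ge0 ?(ltW Zhc_gt0).
Qed.

Lemma sum_hc_prob : \sum_I hc_prob e lam I = 1.
Proof. by rewrite /hc_prob -big_mkcond /= -mulr_suml mulfV // gt_eqF // Zhc_gt0. Qed.

Lemma sum_hc_probE (P : pred {set T}) (f : {set T} -> R) :
  \sum_(I | P I) hc_prob e lam I * f I
    = (\sum_(I | P I && indep e I) lam ^+ #|I| * f I) / Zhc e lam.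
Proof.
rewrite big_mkcondr mulr_suml; apply: eq_bigr => I _.
by rewrite /hc_prob; case: ifP => _; [exact: mulrAC | rewrite !mul0r].
Qed.

Lemma prob_inE v :
  prob_in e lam v
    = (\sum_(I : {set T} | (v \in I) && indep e I) lam ^+ #|I|) / Zhc e lam.
Proof.
rewrite /prob_in; under eq_bigr do rewrite -[hc_prob _ _ _]mulr1.
by rewrite sum_hc_probE; under eq_bigr do rewrite mulr1.
Qed.

Lemma exp_size_sum_prob_in : exp_size e lam = \sum_v prob_in e lam v.
Proof.
have -> : exp_size e lam = \sum_(I : {set T}) \sum_(v in I) hc_prob e lam I.
  by apply: eq_bigr => I _; rewrite sumr_const mulr_natr.
by rewrite (exchange_big_dep xpredT).
Qed.

Lemma exp_Fv_le_card_nbhd v : exp_Fv e lam v <= #|nbhd e v|%:R.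
Proof.
have -> : #|nbhd e v|%:R = \sum_I hc_prob e lam I * #|nbhd e v|%:R.
  by rewrite -mulr_suml sum_hc_prob mul1r.
apply: ler_sum => I _.
apply: ler_wpM2l; first exact: hc_prob_ge0.
by rewrite ler_nat subset_leq_card //; apply/subsetP => u; rewrite inE => /andP[].
Qed.

Lemma prob_in_ge v :
  lam / (1 + lam) * (1 + lam) `^ (- exp_Fv e lam v) <= prob_in e lam v.
Proof.
have jensen : (1 + lam) `^ (- exp_Fv e lam v)
    <= \sum_I hc_prob e lam I * ((1 + lam) ^+ #|ext_uncovered e v I|)^-1.
  rewrite /exp_Fv -sumrN; under eq_bigr do rewrite -mulrN.
  apply: le_trans (powR_sum_le _ c_gt0 hc_prob_ge0 sum_hc_prob) _.
  by apply: ler_sum => I _; rewrite powRN powR_mulrn ?(ltW c_gt0).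
apply: le_trans (ler_wpM2l _ jensen) _; first by rewrite divr_ge0 ?(ltW c_gt0).
rewrite (bigID (fun I : {set T} => v \in I)) /= !sum_hc_probE prob_inE.
rewrite (eq_bigr (fun I : {set T} => lam ^+ #|I|)) => [|I /andP[vI _]]; last first.
  by rewrite ext_uncovered_set0 // cards0 expr0 invr1 mulr1.
have := weight_not_mem_le v.
set a := \sum_(I : {set T} | (v \in I) && indep e I) lam ^+ #|I|.
set b := \sum_(I : {set T} | (v \notin I) && indep e I) _.
move=> lam_b_le_a.
rewrite -mulrDl mulrA ler_pM2r ?invr_gt0 ?Zhc_gt0 // mulrAC ler_pdivrMr //.
by rewrite mulrDr mulrDr mulr1 [a * lam]mulrC addrC lerD2r.
Qed.

Lemma exp_size_ge : (0 < #|T|)%N ->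
  lam / (1 + lam) * #|T|%:R * (1 + lam) `^ (- ((2 * #|edges e|)%:R / #|T|%:R))
    <= exp_size e lam.
Proof.
move=> T_gt0; set n : R := #|T|%:R.
have n_gt0 : 0 < n by rewrite ltr0n.
have uniform_sum1 : \sum_(v : T) n^-1 = 1.
  by rewrite sumr_const -mulr_natr mulVf // gt_eqF.
have inv_n_ge0 : 0 <= n^-1 by rewrite invr_ge0 ltW.
have jensen := powR_sum_le (fun v => - exp_Fv e lam v) c_gt0
  (fun _ => inv_n_ge0) uniform_sum1.
rewrite exp_size_sum_prob_in; apply: le_trans (ler_sum _ (fun v _ => prob_in_ge v)).
rewrite -mulr_sumr -mulrA ler_wpM2l ?divr_ge0 ?(ltW c_gt0) //.
pose avg := \sum_v n^-1 * (1 + lam) `^ (- exp_Fv e lam v).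
apply: le_trans (_ : _ <= n * avg) _; last first.
  by rewrite /avg mulr_sumr; under eq_bigr do rewrite mulrA mulfV ?gt_eqF // mul1r.
apply: le_trans (ler_wpM2l (ltW n_gt0) jensen).
rewrite ler_wpM2l ?(ltW n_gt0) // ler_powR ?lerDl //.
under eq_bigr do rewrite mulrN.
rewrite sumrN lerN2 -mulr_sumr mulrC ler_wpM2r ?invr_ge0 ?(ltW n_gt0) //.
apply: le_trans (_ : _ <= \sum_v #|nbhd e v|%:R) _.
  by apply: ler_sum => v _; exact: exp_Fv_le_card_nbhd.
by rewrite -natr_sum ler_nat sum_card_nbhd_le.
Qed.

End HardCore.

Theorem lemma3p1 (T : finType) (e : rel T) (R : realType) (lam : R)
  (e_sym : symmetric e) (e_irr : irreflexive e)
  (hT : (0 < #|T|)%N) (hlam : 0 < lam) :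
  (forall v : T,
     lam / (1 + lam) * (1 + lam) `^ (- exp_Fv e lam v) <= prob_in e lam v)
  /\
  lam / (1 + lam) * (#|T|)%:R *
    (1 + lam) `^ (- ((2 * #|edges e|)%:R / (#|T|)%:R)) <= exp_size e lam.
Proof.
have lam_ge0 : 0 <= lam := ltW hlam.
split; [exact: prob_in_ge | exact: exp_size_ge].
Qed.
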